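(* Let $\mathcal{C}$ be a category, $\mathcal{D}$ a full pro-reflective subcategory, $J$ a directed partially ordered set, $X\in Ob\,\mathcal{C}$, $\boldsymbol{p}=(p_\lambda):X\to\boldsymbol{X}=(X_\lambda,p_{\lambda\lambda'},\Lambda)$ a $\mathcal{D}$-expansion of $X$, and $Q\in Ob\,\mathcal{D}$. Then every $J$-shape morphism $F:X\to Q$ of $Sh^J_{(\mathcal{C},\mathcal{D})}$ is induced by a family $(\varphi^j)_{j\in J}$ of $\mathcal{C}$-morphisms $\varphi^j:X\to Q$ that uniformly factorizes through $\boldsymbol{p}$.
   Context: An inverse system $(X_\lambda,p_{\lambda\lambda'},\Lambda)$: $\Lambda$ directed preordered, $p_{\lambda\lambda'}:X_{\lambda'}\to X_\lambda$ ($\lambda\le\lambda'$), $p_{\lambda\lambda}=1$, $p_{\lambda\lambda'}p_{\lambda'\lambda''}=p_{\lambda\lambda''}$. A $J$-morphism $(f,f^j_\mu):\boldsymbol{X}\to\boldsymbol{Y}=(Y_\mu,q_{\mu\mu'},M)$: $f:M\to\Lambda$ and $f^j_\mu:X_{f(\mu)}\to Y_\mu$ ($j\in J$) such that for all $\mu\le\mu'$ there exist $\lambda\ge f(\mu),f(\mu')$, $j_0$ with $f^{j'}_\mu p_{f(\mu)\lambda}=q_{\mu\mu'}f^{j'}_{\mu'}p_{f(\mu')\lambda}$ for $j'\ge j_0$; $(f,f^j_\mu)\sim(f',f'^j_\mu)$ iff for each $\mu$ there are $\lambda\ge f(\mu),f'(\mu)$, $j_0$ with $f^{j'}_\mu p_{f(\mu)\lambda}=f'^{j'}_\mu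 p_{f'(\mu)\lambda}$ for $j'\ge j_0$; $pro^J$-$\mathcal{D}$ is the quotient category (composition $(fg,g^j_\nu f^j_{g(\nu)})$). In particular a morphism $\boldsymbol{X}\to(Q)$ into the one-term system is represented by an index $\lambda$ and a family $(f^j:X_\lambda\to Q)_{j\in J}$. A $\mathcal{D}$-expansion: family $\boldsymbol{p}=(p_\lambda:X\to X_\lambda)$, $\boldsymbol{X}$ in $\mathcal{D}$, $p_{\lambda\lambda'}p_{\lambda'}=p_\lambda$, with (E1) every $h:X\to P$, $P\in Ob\,\mathcal{D}$, factors as $gp_\lambda$, (E2) $gp_\lambda=g'p_\lambda$ implies $gp_{\lambda\lambda'}=g'p_{\lambda\lambda'}$ for some $\lambda'\ge\lambda$; pro-reflective: every object has one. $Sh^J_{(\mathcal{C},\mathcal{D})}$: objects of $\mathcal{C}$; morphisms $X\to Y$ are morphisms of $pro^J$-$\mathcal{D}$ between chosen $\mathcal{D}$-expansions, identified across choices via the canonical $pro$-$\mathcal{D}$ isomorphisms between expansions (made constant in $j$). A family $(\varphi^j:X\to Q)_{j\in J}$ uniformly factorizes through $\boldsymbol{p}$ if there are a fixed $\lambda\in\Lambda$ and $\mathcal{D}$-morphisms $f^j:X_\lambda\to Q$ with $\varphi^j=f^jp_\lambda$ for all $j$; the $J$-shape morphism it induces (via this $\lambda$ and $(f^j)$) is the one represented, w.r.t. the expansions $\boldsymbol{p}$ and $1:Q\to(Q)$, by the $pro^J$-$\mathcal{D}$ morphism $[(f^j)]:\boldsymbol{X}\to(Q)$ with index function $1\mapsto\lambda$.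 *)

Set Implicit Arguments.
Unset Strict Implicit.

Record Category := {
  Obj : Type;
  Hom : Obj -> Obj -> Type;
  cid : forall A, Hom A A;
  comp : forall A B E, Hom B E -> Hom A B -> Hom A E;
  comp_id_l : forall A B (f : Hom A B), comp (cid B) f = f;
  comp_id_r : forall A B (f : Hom A B), comp f (cid A) = f;
  comp_assoc : forall A B E G (f : Hom A B) (g : Hom B E) (h : Hom E G),
      comp h (comp g f) = comp (comp h g) f
}.

Arguments Obj : clear implicits.
Arguments Hom : clear implicits.
Arguments cid {C} A : rename.
Arguments comp {C A B E} _ _ : rename.

Record DirPoset := {
  dp : Type;
  dle : dp -> dp -> Prop;
  dle_refl : forall a, dle a a;
  dle_trans : forall a b c, dle a b -> dle b c -> dle a c;
  dle_antisym : forall a b, dle a b -> dle b a -> a = b;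
  dp_inhabited : inhabited dp;
  dp_directed : forall a b, exists c, dle a c /\ dle b c
}.

Section Systems.
Variable C : Category.
(* A full subcategory D of C is given by a predicate on objects; its morphisms
   are all C-morphisms between its objects (fullness). *)
Variable D : Obj C -> Prop.

Record invsys := {
  ix : Type;
  ile : ix -> ix -> Prop;
  ile_refl : forall a, ile a a;
  ile_trans : forall a b c, ile a b -> ile b c -> ile a c;
  ix_inhabited : inhabited ix;
  ix_directed : forall a b, exists c, ile a c /\ ile b c;
  sobj : ix -> Obj C;
  sobj_D : forall l, D (sobj l);
  bond : forall l l', ile l l' -> Hom C (sobj l') (sobj l);
  bond_id : forall l (h : ile l l), bond h = cid (sobj l);
  bond_comp : forall l l' l'' (h1 : ile l l') (h2 : ile l' l'') (h3 : ile l l''),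
      comp (bond h1) (bond h2) = bond h3
}.


Definition one_term (Q : Obj C) (HQ : D Q) : invsys.
Proof.
  refine {| ix := unit; ile := fun _ _ => True;
            sobj := fun _ => Q; sobj_D := fun _ => HQ;
            bond := fun _ _ _ => cid Q |}.
  - intros; exact I.
  - intros; exact I.
  - exact (inhabits tt).
  - intros; exists tt; split; exact I.
  - intros; reflexivity.
  - intros; apply comp_id_l.
Defined.

Definition expansion (X : Obj C) (S : invsys)
    (p : forall l, Hom C X (@sobj S l)) : Prop :=
  (forall l l' (h : @ile S l l'), comp (bond h) (p l') = p l) /\
  (forall P, D P -> forall h : Hom C X P,
      exists l (g : Hom C (@sobj S l) P), h = comp g (p l)) /\
  (forall P, D P -> forall l (g g' : Hom C (@sobj S l) P),
      comp g (p l) = comp g' (p l) ->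
      exists l' (h : @ile S l l'), comp g (bond h) = comp g' (bond h)).

Definition pro_reflective : Prop :=
  forall X : Obj C, exists (S : invsys) (p : forall l, Hom C X (@sobj S l)),
    expansion p.

Variable J : DirPoset.

Record jraw (S T : invsys) := {
  jf : ix T -> ix S;
  jm : dp J -> forall mu, Hom C (@sobj S (jf mu)) (@sobj T mu)
}.


Definition is_jmorph (S T : invsys) (F : jraw S T) : Prop :=
  forall mu mu' (h : @ile T mu mu'),
    exists lam (h1 : @ile S (jf F mu) lam) (h2 : @ile S (jf F mu') lam) j0,
      forall j', dle j0 j' ->
        comp (jm F j' mu) (bond h1) = comp (comp (bond h) (jm F j' mu')) (bond h2).

Definition jequiv (S T : invsys) (F G : jraw S T) : Prop :=
  forall mu, exists lam (h1 : @ile S (jf F mu) lam) (h2 : @ile S (jf G mu) lam) j0,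
    forall j', dle j0 j' ->
      comp (jm F j' mu) (bond h1) = comp (jm G j' mu) (bond h2).

Definition jcomp (S T U : invsys) (G : jraw T U) (F : jraw S T) : jraw S U :=
  {| jf := fun nu => jf F (jf G nu);
     jm := fun j nu => comp (jm G j nu) (jm F j (jf G nu)) |}.

Record proraw (S T : invsys) := {
  pf : ix T -> ix S;
  pm : forall mu, Hom C (@sobj S (pf mu)) (@sobj T mu)
}.


Definition is_promorph (S T : invsys) (u : proraw S T) : Prop :=
  forall mu mu' (h : @ile T mu mu'),
    exists lam (h1 : @ile S (pf u mu) lam) (h2 : @ile S (pf u mu') lam),
      comp (pm u mu) (bond h1) = comp (comp (bond h) (pm u mu')) (bond h2).

Definition const_j (S T : invsys) (u : proraw S T) : jraw S T :=
  {| jf := pf u; jm := fun _ mu => pm u mu |}.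

Definition canonical_between (X : Obj C) (S S' : invsys)
    (p : forall l, Hom C X (@sobj S l)) (p' : forall l, Hom C X (@sobj S' l))
    (u : proraw S S') : Prop :=
  is_promorph u /\ forall l', comp (pm u l') (p (pf u l')) = p' l'.

(* Identification of representatives of J-shape morphisms X -> Y of
   Sh^J_(C,D): a J-morphism F : S -> T w.r.t. expansions (p : X -> S),
   (q : Y -> T), and F' : S' -> T' w.r.t. (p', q'), represent the same shape
   morphism iff, for the canonical isomorphisms u : S -> S', v : T -> T',
   v F ~ F' u. *)
Definition same_shape (X Y : Obj C)
    (S : invsys) (p : forall l, Hom C X (@sobj S l))
    (T : invsys) (q : forall m, Hom C Y (@sobj T m)) (F : jraw S T)
    (S' : invsys) (p' : forall l, Hom C X (@sobj S' l))
    (T' : invsys) (q' : forall m, Hom C Y (@sobj T' m)) (F' : jraw S' T') : Prop :=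
  forall (u : proraw S S') (v : proraw T T'),
    canonical_between p p' u -> canonical_between q q' v ->
    jequiv (jcomp (const_j v) F) (jcomp F' (const_j u)).

Definition unif_factorizes_via (X Q : Obj C) (S : invsys)
    (p : forall l, Hom C X (@sobj S l)) (phi : dp J -> Hom C X Q)
    (lam : ix S) (f : dp J -> Hom C (@sobj S lam) Q) : Prop :=
  forall j, phi j = comp (f j) (p lam).

Definition induced_jraw (Q : Obj C) (HQ : D Q) (S : invsys)
    (lam : ix S) (f : dp J -> Hom C (@sobj S lam) Q) : jraw S (@one_term Q HQ) :=
  @Build_jraw S (@one_term Q HQ) (fun _ => lam) (fun j _ => f j).

Definition one_term_exp (Q : Obj C) (HQ : D Q) :
    forall m, Hom C Q (@sobj (@one_term Q HQ) m) := fun _ => cid Q.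

End Systems.

Arguments invsys {C} D.
Arguments ile {C D} S _ _ : rename.
Arguments sobj {C D} S l : rename.
Arguments bond {C D S l l'} h : rename.
Arguments one_term {C D} Q HQ.
Arguments one_term_exp {C D} Q HQ m.
Arguments expansion {C D X} S p.
Arguments jraw {C D} J S T.
Arguments jf {C D J S T} F mu : rename.
Arguments jm {C D J S T} F j mu : rename.
Arguments pf {C D S T} u mu : rename.
Arguments pm {C D S T} u mu : rename.


(* Factor 1 : Q -> Q through q0 as g q0_mu0, and p0_(f mu0) through p as w p_lam;
   the candidate is f^j := g F0^j_mu0 w.  Two morphisms from terms of an expansion into an object
   of D that agree on X already agree after bonding; this "eventual agreement" is an equivalence
   relation compatible with composition.  Since q0_mu g agrees with the identity in T0, the
   J-morphism condition transports it to F0^j_mu0 versus F0^j_mu, uniformly for large j, and the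
   factorizations of p0 through p transport this agreement from S0 back to S. *)

Section EventualAgreement.
Context {C : Category} {D : Obj C -> Prop} {J : DirPoset}.

Definition agree {S : invsys D} {P : Obj C} {l1 l2}
    (a : Hom C (sobj S l1) P) (b : Hom C (sobj S l2) P) : Prop :=
  exists K (h1 : ile S l1 K) (h2 : ile S l2 K), comp a (bond h1) = comp b (bond h2).

(* [jequiv] is [eventually_agree] at every index, and [is_jmorph] is an instance of it. *)
Definition eventually_agree {S : invsys D} {P : Obj C} {l1 l2}
    (a : dp J -> Hom C (sobj S l1) P) (b : dp J -> Hom C (sobj S l2) P) : Prop :=
  exists K (h1 : ile S l1 K) (h2 : ile S l2 K) j0,
    forall j, dle j0 j -> comp (a j) (bond h1) = comp (b j) (bond h2).

Context {S : invsys D} {P : Obj C}.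

Lemma bond_eq_lift {l1 l2 K K'} {a : Hom C (sobj S l1) P} {b : Hom C (sobj S l2) P}
    {h1 : ile S l1 K} {h2 : ile S l2 K} (k : ile S K K')
    (h1' : ile S l1 K') (h2' : ile S l2 K') :
  comp a (bond h1) = comp b (bond h2) -> comp a (bond h1') = comp b (bond h2').
Proof.
  intro E.
  rewrite <- (bond_comp h1 k h1'), <- (bond_comp h2 k h2'), !comp_assoc, E.
  reflexivity.
Qed.

Lemma eventually_agree_of_eq {l} {a b : dp J -> Hom C (sobj S l) P} (j0 : dp J) :
  (forall j, dle j0 j -> a j = b j) -> eventually_agree a b.
Proof.
  intro E. exists l, (ile_refl l), (ile_refl l), j0.
  intros j hj. rewrite (E j hj). reflexivity.
Qed.

Lemma eventually_agree_ext {l1 l2} {a a' : dp J -> Hom C (sobj S l1) P}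
    {b b' : dp J -> Hom C (sobj S l2) P} :
  eventually_agree a b -> (forall j, a j = a' j) -> (forall j, b j = b' j) ->
  eventually_agree a' b'.
Proof.
  intros [K [h1 [h2 [j0 E]]]] Ea Eb.
  exists K, h1, h2, j0. intros j hj. rewrite <- Ea, <- Eb. exact (E j hj).
Qed.

Lemma eventually_agree_sym {l1 l2} {a : dp J -> Hom C (sobj S l1) P}
    {b : dp J -> Hom C (sobj S l2) P} :
  eventually_agree a b -> eventually_agree b a.
Proof.
  intros [K [h1 [h2 [j0 E]]]].
  exists K, h2, h1, j0. intros j hj. symmetry. exact (E j hj).
Qed.

Lemma eventually_agree_trans {l1 l2 l3} {a : dp J -> Hom C (sobj S l1) P}
    {b : dp J -> Hom C (sobj S l2) P} {c : dp J -> Hom C (sobj S l3) P} :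
  eventually_agree a b -> eventually_agree b c -> eventually_agree a c.
Proof.
  intros [K [h1 [h2 [j0 Eab]]]] [K' [h2' [h3 [j0' Ebc]]]].
  destruct (ix_directed K K') as [M [k k']].
  destruct (dp_directed j0 j0') as [j1 [d d']].
  exists M, (ile_trans h1 k), (ile_trans h3 k'), j1. intros j hj.
  rewrite (bond_eq_lift k (ile_trans h1 k) (ile_trans h2 k) (Eab j (dle_trans d hj))).
  exact (bond_eq_lift k' (ile_trans h2 k) (ile_trans h3 k') (Ebc j (dle_trans d' hj))).
Qed.

Lemma eventually_agree_postcomp {P' : Obj C} (c : Hom C P P') {l1 l2}
    {a : dp J -> Hom C (sobj S l1) P} {b : dp J -> Hom C (sobj S l2) P} :
  eventually_agree a b ->
  eventually_agree (fun j => comp c (a j)) (fun j => comp c (b j)).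
Proof.
  intros [K [h1 [h2 [j0 E]]]].
  exists K, h1, h2, j0. intros j hj. rewrite <- !comp_assoc, (E j hj). reflexivity.
Qed.

Lemma agree_postcomp_family {P' : Obj C} (c : dp J -> Hom C P P') {l1 l2}
    {x : Hom C (sobj S l1) P} {y : Hom C (sobj S l2) P} :
  agree x y -> eventually_agree (fun j => comp (c j) x) (fun j => comp (c j) y).
Proof.
  intros [K [h1 [h2 E]]]. destruct (dp_inhabited J) as [j0].
  exists K, h1, h2, j0. intros j _. rewrite <- !comp_assoc, E. reflexivity.
Qed.

End EventualAgreement.

Section Expansions.
Context {C : Category} {D : Obj C -> Prop} {J : DirPoset}.
Context {X : Obj C} {S : invsys D} {p : forall l, Hom C X (sobj S l)}.
Variable Hp : expansion S p.

Lemma expansion_factor {P : Obj C} :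
  D P -> forall h : Hom C X P, exists l (g : Hom C (sobj S l) P), h = comp g (p l).
Proof. apply (proj1 (proj2 Hp)). Qed.

Lemma expansion_agree {P : Obj C} (HP : D P) {l1 l2}
    {a : Hom C (sobj S l1) P} {b : Hom C (sobj S l2) P} :
  comp a (p l1) = comp b (p l2) -> agree a b.
Proof.
  intro E. destruct Hp as [Hcompat [_ Hcoeq]].
  destruct (ix_directed l1 l2) as [K [k1 k2]].
  assert (EK : comp (comp a (bond k1)) (p K) = comp (comp b (bond k2)) (p K)).
  { rewrite <- !comp_assoc, !Hcompat. exact E. }
  destruct (Hcoeq P HP K _ _ EK) as [K' [k EK']].
  exists K', (ile_trans k1 k), (ile_trans k2 k).
  rewrite <- (bond_comp k1 k), <- (bond_comp k2 k), !comp_assoc. exact EK'.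
Qed.

Lemma eventually_agree_transfer {S0 : invsys D} {p0 : forall l, Hom C X (sobj S0 l)}
    (Hp0 : forall l l' (h : ile S0 l l'), comp (bond h) (p0 l') = p0 l)
    {P : Obj C} {k1 k2} {a : dp J -> Hom C (sobj S0 k1) P} {b : dp J -> Hom C (sobj S0 k2) P}
    {l1 l2} {w1 : Hom C (sobj S l1) (sobj S0 k1)} {w2 : Hom C (sobj S l2) (sobj S0 k2)} :
  comp w1 (p l1) = p0 k1 -> comp w2 (p l2) = p0 k2 ->
  eventually_agree a b ->
  eventually_agree (fun j => comp (a j) w1) (fun j => comp (b j) w2).
Proof.
  intros Hw1 Hw2 [K [e1 [e2 [j0 Eab]]]].
  destruct (expansion_factor (sobj_D K) (p0 K)) as [l [w Hw]].
  assert (A1 : agree w1 (comp (bond e1) w)).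
  { apply expansion_agree; [apply sobj_D |].
    rewrite <- comp_assoc, <- Hw, Hp0. exact Hw1. }
  assert (A2 : agree w2 (comp (bond e2) w)).
  { apply expansion_agree; [apply sobj_D |].
    rewrite <- comp_assoc, <- Hw, Hp0. exact Hw2. }
  eapply eventually_agree_trans; [exact (agree_postcomp_family a A1) |].
  eapply eventually_agree_trans;
    [| exact (eventually_agree_sym (agree_postcomp_family b A2))].
  apply (eventually_agree_of_eq j0). intros j hj.
  rewrite !comp_assoc, (Eab j hj). reflexivity.
Qed.

End Expansions.

Lemma jmorph_transport {C : Category} {D : Obj C -> Prop} {J : DirPoset}
    {S T : invsys D} {F : jraw J S T} (HF : is_jmorph F)
    {P : Obj C} {mu0 mu1} {a : Hom C (sobj T mu0) P} {b : Hom C (sobj T mu1) P} :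
  agree a b ->
  eventually_agree (fun j => comp a (jm F j mu0)) (fun j => comp b (jm F j mu1)).
Proof.
  intros [K [k0 [k1 E]]]. destruct (dp_inhabited J) as [j0].
  eapply eventually_agree_trans; [exact (eventually_agree_postcomp a (HF mu0 K k0)) |].
  eapply eventually_agree_trans;
    [| exact (eventually_agree_sym (eventually_agree_postcomp b (HF mu1 K k1)))].
  apply (eventually_agree_of_eq j0). intros j _.
  rewrite !comp_assoc, E. reflexivity.
Qed.

Lemma pm_canonical_from_one_term {C : Category} {D : Obj C -> Prop} {Q : Obj C} {HQ : D Q}
    {T : invsys D} {q : forall m, Hom C Q (sobj T m)} {v : proraw (one_term Q HQ) T} :
  canonical_between (one_term_exp Q HQ) q v -> forall mu, pm v mu = q mu.
Proof.
  intros [_ Hv] mu. rewrite <- (Hv mu). symmetry. apply comp_id_r.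
Qed.

Theorem lemma7 (C : Category) (D : Obj C -> Prop) (HD : pro_reflective D)
  (J : DirPoset) (X : Obj C) (S : invsys D) (p : forall l, Hom C X (sobj S l))
  (Hp : expansion S p) (Q : Obj C) (HQ : D Q)
  (* an arbitrary J-shape morphism F : X -> Q, given by a representative
     F0 : S0 -> T0 w.r.t. some D-expansions p0 of X and q0 of Q *)
  (S0 : invsys D) (p0 : forall l, Hom C X (sobj S0 l)) (Hp0 : expansion S0 p0)
  (T0 : invsys D) (q0 : forall m, Hom C Q (sobj T0 m)) (Hq0 : expansion T0 q0)
  (F0 : jraw J S0 T0) (HF0 : is_jmorph F0) :
  exists (phi : dp J -> Hom C X Q) (lam : ix S) (f : dp J -> Hom C (sobj S lam) Q),
    unif_factorizes_via p phi f /\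
    same_shape p (one_term_exp Q HQ) (induced_jraw HQ f) p0 q0 F0.
Proof.
  destruct (expansion_factor Hq0 HQ (cid Q)) as [mu0 [g Hg]].
  destruct (expansion_factor Hp (sobj_D (jf F0 mu0)) (p0 (jf F0 mu0))) as [lam [w Hw]].
  exists (fun j => comp (comp g (comp (jm F0 j mu0) w)) (p lam)), lam,
    (fun j => comp g (comp (jm F0 j mu0) w)).
  split; [intro j; reflexivity |].
  intros u v [_ Hu] Hv mu.
  assert (Hg_mu : agree (comp (q0 mu) g) (cid (sobj T0 mu))).
  { apply (expansion_agree Hq0 (sobj_D mu)).
    rewrite <- comp_assoc, <- Hg, comp_id_r, comp_id_l. reflexivity. }
  eapply eventually_agree_ext.
  - exact (eventually_agree_transfer Hp (proj1 Hp0) (eq_sym Hw) (Hu _)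
             (jmorph_transport HF0 Hg_mu)).
  - intro j. simpl. rewrite (pm_canonical_from_one_term Hv), !comp_assoc. reflexivity.
  - intro j. simpl. rewrite comp_id_l. reflexivity.
Qed.
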